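(* Let $r>0$. On the range $s>|r-1|$, the functional equation $f_1(s,r)+f_1(s+2r,r)=\frac{1}{s+1}$ has a unique solution satisfying $\lim_{s\to\infty}f_1(s,r)=0$, namely $$f_1(s,r)=\dfrac{1}{2-2r+2s+2\,\mathop{K}\limits_{n=1}^{\infty}\left(\dfrac{n^2r^2}{1-r+s}\right)},$$ and the functional equation $f_2(s,r)+f_2(s+2r,r)=\frac{1}{s+2r-1}$ has a unique solution satisfying $\lim_{s\to\infty}f_2(s,r)=0$, namely $$f_2(s,r)=\dfrac{1}{2r-2+2s+2\,\mathop{K}\limits_{n=1}^{\infty}\left(\dfrac{n^2r^2}{r-1+s}\right)}.$$
   Context: $\mathop{K}_{n=1}^{\infty}\left(\frac{a_n}{b}\right)$ denotes the continued fraction $\cfrac{a_1}{b+\cfrac{a_2}{b+\cdots}}$ (limit of convergents). *)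

From Stdlib Require Import Reals.
From Coquelicot Require Import Coquelicot.
Open Scope R_scope.

Fixpoint cf_tail (a : nat -> R) (b : R) (k m : nat) : R :=
  match m with
  | O => 0
  | S m' => a k / (b + cf_tail a b (S k) m')
  end.

(* N-th convergent of K_{n=1}^oo (a_n / b). *)
Definition cf_conv (a : nat -> R) (b : R) (N : nat) : R := cf_tail a b 1 N.

(* Value of the continued fraction: limit of the convergents
   (meaningful when ex_finite_lim_seq holds). *)
Definition cf_val (a : nat -> R) (b : R) : R := real (Lim_seq (cf_conv a b)).

Definition num_seq (r : R) : nat -> R := fun n => (INR n) ^ 2 * r ^ 2.

Definition f1_sol (r s : R) : R :=
  1 / (2 - 2 * r + 2 * s + 2 * cf_val (num_seq r) (1 - r + s)).

Definition f2_sol (r s : R) : R :=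
  1 / (2 * r - 2 + 2 * s + 2 * cf_val (num_seq r) (r - 1 + s)).

From Stdlib Require Import Reals Lra Lia.
From Coquelicot Require Import Coquelicot.
Open Scope R_scope.

(* For b > 0 write x(b) for the value of K(n^2 r^2 / b).  The numerators A_N and
   denominators B_N of the convergents satisfy Z_(n+2) = b Z_(n+1) + (n+1)^2 r^2 Z_n,
   and consecutive convergents differ by (-1)^N / e_N with
   e_N = B_(N+2) B_(N+1) / prod_(k <= N+1) k^2 r^2.  AM-GM gives
   e_(N+2) >= e_N + 2 b e_(N+1) / ((N+3) r), so e_N grows at least like ln N and the
   convergents converge as the partial sums of an alternating series.

   The map Z_n |-> (2 n r + b + 3 r) Z_(n+1) + 2 (n+1)^2 r^2 Z_n sends solutions of the
   recurrence for b to solutions of the recurrence for b + 2 r.  Expressing the A, B of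
   b + 2 r through those of b shows that g(b) = 1 / (2 b + 2 x(b)) satisfies
   g(b) + g(b + 2 r) = 1 / (b + r) up to an error O(1 / e_N), hence exactly.  The
   solutions f1, f2 are g(s + 1 - r) and g(s + r - 1); they tend to 0 since x >= 0.  The
   difference d of two solutions satisfies d(s + 2 r) = - d(s), so |d| is 2r-periodic and
   tends to 0, hence vanishes. *)

Section ThreeTerm.

Variables p q : nat -> R.

Definition three_term (X : nat -> R) : Prop :=
  forall n, X (S (S n)) = p n * X (S n) + q n * X n.

Fixpoint three_term_pair (x0 x1 : R) (n : nat) : R * R :=
  match n with
  | O => (x0, x1)
  | S m => let xy := three_term_pair x0 x1 m in
           (snd xy, p m * snd xy + q m * fst xy)
  end.

Definition three_term_seq (x0 x1 : R) (n : nat) : R :=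
  fst (three_term_pair x0 x1 n).

Lemma three_term_seq_rec x0 x1 : three_term (three_term_seq x0 x1).
Proof. intro n; reflexivity. Qed.

Lemma three_term_ext (X Y : nat -> R) :
  three_term X -> three_term Y -> X 0%nat = Y 0%nat -> X 1%nat = Y 1%nat ->
  forall n, X n = Y n.
Proof.
  intros hX hY h0 h1.
  assert (both : forall n, X n = Y n /\ X (S n) = Y (S n)).
  { induction n as [|n [e0 e1]]; [easy|].
    split; [easy|]. rewrite hX, hY, e0, e1. reflexivity. }
  intro n; apply both.
Qed.

Hypotheses (hp : forall n, 0 < p n) (hq : forall n, 0 <= q n).

Lemma three_term_nonneg (X : nat -> R) :
  three_term X -> 0 <= X 0%nat -> 0 <= X 1%nat -> forall n, 0 <= X n.
Proof.
  intros hX h0 h1.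
  assert (both : forall n, 0 <= X n /\ 0 <= X (S n)).
  { induction n as [|n [e0 e1]]; [easy|].
    split; [easy|]. rewrite hX.
    pose proof (hp n); pose proof (hq n). nra. }
  intro n; apply both.
Qed.

Lemma three_term_pos (X : nat -> R) :
  three_term X -> 0 <= X 0%nat -> 0 < X 1%nat -> forall n, 0 < X (S n).
Proof.
  intros hX h0 h1.
  assert (both : forall n, 0 <= X n /\ 0 < X (S n)).
  { induction n as [|n [e0 e1]]; [easy|].
    split; [lra|]. rewrite hX.
    pose proof (hp n); pose proof (hq n). nra. }
  intro n; apply both.
Qed.

End ThreeTerm.

Section Wallis.

Variables (a : nat -> R) (b : R).

Definition wallis_rec : (nat -> R) -> Prop := three_term (fun _ => b) (fun n => a (S n)).

Definition cf_numer : nat -> R := three_term_seq (fun _ => b) (fun n => a (S n)) 1 b.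
Definition cf_denom : nat -> R := three_term_seq (fun _ => b) (fun n => a (S n)) 0 1.

Lemma cf_numer_rec : wallis_rec cf_numer. Proof. apply three_term_seq_rec. Qed.
Lemma cf_denom_rec : wallis_rec cf_denom. Proof. apply three_term_seq_rec. Qed.

Fixpoint numer_prod (n : nat) : R :=
  match n with
  | O => 1
  | S m => numer_prod m * a (S m)
  end.

Lemma cf_casoratian n :
  cf_numer (S n) * cf_denom n - cf_numer n * cf_denom (S n) = - (-1) ^ n * numer_prod n.
Proof.
  induction n as [|n IH].
  - cbn. ring.
  - rewrite cf_numer_rec, cf_denom_rec.
    replace (- (-1) ^ S n * numer_prod (S n)) with
      (- a (S n) * (- (-1) ^ n * numer_prod n)) by (cbn; ring).
    rewrite <- IH. ring.
Qed.

Fixpoint cf_tail_with (k m : nat) (w : R) : R :=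
  match m with
  | O => w
  | S m' => a k / (b + cf_tail_with (S k) m' w)
  end.

Lemma cf_tail_with_0 k m : cf_tail a b k m = cf_tail_with k m 0.
Proof. revert k; induction m as [|m IH]; intro k; cbn; [|rewrite IH]; reflexivity. Qed.

Lemma cf_tail_with_snoc m : forall k w,
  cf_tail_with k (S m) w = cf_tail_with k m (a (k + m)%nat / (b + w)).
Proof.
  induction m as [|m IH]; intros k w.
  - cbn. rewrite Nat.add_0_r. reflexivity.
  - change (cf_tail_with k (S (S m)) w) with (a k / (b + cf_tail_with (S k) (S m) w)).
    rewrite IH, Nat.add_succ_r. reflexivity.
Qed.

Hypotheses (ha : forall n, 0 < a (S n)) (hb : 0 < b).

Lemma numer_prod_pos n : 0 < numer_prod n.
Proof. induction n as [|n IH]; cbn; [lra|]. pose proof (ha n). nra. Qed.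

Lemma wallis_rec_nonneg X : wallis_rec X -> 0 <= X 0%nat -> 0 <= X 1%nat -> forall n, 0 <= X n.
Proof. apply three_term_nonneg; [intros; exact hb|intro n; left; apply ha]. Qed.

Lemma wallis_rec_pos X : wallis_rec X -> 0 <= X 0%nat -> 0 < X 1%nat -> forall n, 0 < X (S n).
Proof. apply three_term_pos; [intros; exact hb|intro n; left; apply ha]. Qed.

Lemma cf_numer_pos n : 0 < cf_numer n.
Proof.
  destruct n as [|n]; [cbn; lra|].
  apply wallis_rec_pos; [apply cf_numer_rec|cbn; lra|exact hb].
Qed.

Lemma cf_denom_pos n : 0 < cf_denom (S n).
Proof. apply wallis_rec_pos; [apply cf_denom_rec|cbn; lra|cbn; lra]. Qed.

Lemma cf_denom_nonneg n : 0 <= cf_denom n.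
Proof. apply wallis_rec_nonneg; [apply cf_denom_rec|cbn; lra|cbn; lra]. Qed.

Lemma cf_denom_le_numer n : b * cf_denom n <= cf_numer n.
Proof.
  enough (0 <= cf_numer n - b * cf_denom n) by lra.
  apply (wallis_rec_nonneg (fun n => cf_numer n - b * cf_denom n)); [|cbn; lra..].
  intro k. rewrite cf_numer_rec, cf_denom_rec. ring.
Qed.

Lemma cf_tail_with_eq N : forall w, 0 <= w ->
  b + cf_tail_with 1 N w =
  (cf_numer (S N) + w * cf_numer N) / (cf_denom (S N) + w * cf_denom N).
Proof.
  induction N as [|N IH]; intros w hw.
  - cbn. field.
  - rewrite cf_tail_with_snoc; cbn [Nat.add].
    assert (hw' : 0 <= a (S N) / (b + w)).
    { apply Rdiv_le_0_compat; [left; apply ha|lra]. }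
    rewrite (IH _ hw'), (cf_numer_rec N), (cf_denom_rec N).
    pose proof (cf_denom_pos N). pose proof (cf_denom_nonneg N).
    pose proof (cf_denom_pos (S N)). pose proof (ha N).
    assert (0 <= a (S N) / (b + w) * cf_denom N) by (apply Rmult_le_pos; lra).
    assert (0 <= a (S N) * cf_denom N) by nra.
    field. nra.
Qed.

Lemma cf_conv_eq N : b + cf_conv a b N = cf_numer (S N) / cf_denom (S N).
Proof.
  unfold cf_conv. rewrite cf_tail_with_0, cf_tail_with_eq by lra.
  rewrite !Rmult_0_l, !Rplus_0_r. reflexivity.
Qed.

Lemma cf_conv_nonneg N : 0 <= cf_conv a b N.
Proof.
  pose proof (cf_conv_eq N). pose proof (cf_denom_le_numer (S N)).
  pose proof (cf_denom_pos N).
  enough (b <= cf_numer (S N) / cf_denom (S N)) by lra.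
  apply Rmult_le_reg_r with (cf_denom (S N)); [lra|].
  field_simplify; lra.
Qed.

Lemma inv_two_cf_conv N :
  1 / (2 * b + 2 * cf_conv a b N) = cf_denom (S N) / (2 * cf_numer (S N)).
Proof.
  replace (2 * b + 2 * cf_conv a b N) with (2 * (b + cf_conv a b N)) by ring.
  rewrite cf_conv_eq. pose proof (cf_numer_pos (S N)). pose proof (cf_denom_pos N).
  field. lra.
Qed.

(* [cf_gap N] is [1 / |x_(N+1) - x_N|] for the convergents [x_N]. *)
Definition cf_gap (N : nat) : R :=
  cf_denom (S (S N)) * cf_denom (S N) / numer_prod (S N).

Lemma cf_gap_pos N : 0 < cf_gap N.
Proof.
  unfold cf_gap. pose proof (cf_denom_pos N). pose proof (cf_denom_pos (S N)).
  pose proof (numer_prod_pos (S N)). apply Rdiv_lt_0_compat; nra.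
Qed.

Lemma cf_conv_succ_sub N : cf_conv a b (S N) - cf_conv a b N = (-1) ^ N / cf_gap N.
Proof.
  pose proof (cf_denom_pos N). pose proof (cf_denom_pos (S N)).
  pose proof (numer_prod_pos (S N)).
  replace (cf_conv a b (S N) - cf_conv a b N) with
    ((cf_numer (S (S N)) * cf_denom (S N) - cf_numer (S N) * cf_denom (S (S N)))
     / (cf_denom (S (S N)) * cf_denom (S N))).
  2: { replace (cf_conv a b (S N) - cf_conv a b N) with
         ((b + cf_conv a b (S N)) - (b + cf_conv a b N)) by ring.
       rewrite !cf_conv_eq. field. lra. }
  rewrite cf_casoratian. unfold cf_gap. cbn [pow]. field. lra.
Qed.

Lemma cf_gap_succ_sub N :
  cf_gap (S N) - cf_gap N = b * cf_denom (S (S N)) ^ 2 / numer_prod (S (S N)).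
Proof.
  pose proof (numer_prod_pos (S N)). pose proof (ha (S N)).
  unfold cf_gap. rewrite (cf_denom_rec (S N)).
  change (numer_prod (S (S N))) with (numer_prod (S N) * a (S (S N))).
  field. lra.
Qed.

Lemma cf_gap_le N M : (N <= M)%nat -> cf_gap N <= cf_gap M.
Proof.
  induction 1 as [|M _ IH]; [lra|].
  pose proof (cf_gap_succ_sub M). pose proof (numer_prod_pos (S (S M))).
  enough (0 <= b * cf_denom (S (S M)) ^ 2 / numer_prod (S (S M))) by lra.
  apply Rdiv_le_0_compat; [|lra]. pose proof (pow2_ge_0 (cf_denom (S (S M)))). nra.
Qed.

Lemma cf_gap_step2 N c : 0 < c -> a (S (S (S N))) = c ^ 2 ->
  cf_gap N + 2 * b * cf_gap (S N) / c <= cf_gap (S (S N)).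
Proof.
  intros hc hac.
  pose proof (numer_prod_pos (S (S N))) as hP.
  assert (square : cf_gap (S (S N)) - cf_gap N - 2 * b * cf_gap (S N) / c =
    b * (cf_denom (S (S (S N))) - c * cf_denom (S (S N))) ^ 2
      / (numer_prod (S (S N)) * c ^ 2)).
  { pose proof (cf_gap_succ_sub N). pose proof (cf_gap_succ_sub (S N)).
    replace (cf_gap (S (S N)) - cf_gap N) with
      ((cf_gap (S (S N)) - cf_gap (S N)) + (cf_gap (S N) - cf_gap N)) by ring.
    rewrite H, H0. unfold cf_gap.
    change (numer_prod (S (S (S N)))) with (numer_prod (S (S N)) * a (S (S (S N)))).
    rewrite hac. field. lra. }
  enough (0 <= b * (cf_denom (S (S (S N))) - c * cf_denom (S (S N))) ^ 2
                 / (numer_prod (S (S N)) * c ^ 2)) by lra.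
  apply Rdiv_le_0_compat; [|apply Rmult_lt_0_compat; [lra|apply pow_lt; lra]].
  apply Rmult_le_pos; [lra|apply pow2_ge_0].
Qed.

Section UnboundedGap.

Hypothesis gap_unbounded : forall M, exists N, M < cf_gap N.

Lemma inv_cf_gap_lim : is_lim_seq (fun N => / cf_gap N) 0.
Proof.
  apply is_lim_seq_Reals. intros eps heps.
  destruct (gap_unbounded (/ eps)) as [N0 hN0].
  exists N0. intros n hn. unfold R_dist. rewrite Rminus_0_r.
  pose proof (cf_gap_le N0 n ltac:(lia)). pose proof (cf_gap_pos n).
  rewrite Rabs_pos_eq by (left; apply Rinv_0_lt_compat; lra).
  rewrite <- (Rinv_inv eps). apply Rinv_lt_contravar; [|lra].
  apply Rmult_lt_0_compat; [apply Rinv_0_lt_compat|]; lra.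
Qed.

Lemma cf_conv_cvg : exists l : R, is_lim_seq (cf_conv a b) l /\ 0 <= l.
Proof.
  set (d N := / cf_gap N).
  assert (hd : Un_decreasing d).
  { intro n. apply Rinv_le_contravar; [apply cf_gap_pos|apply cf_gap_le; lia]. }
  assert (hd0 : Un_cv d 0) by (apply is_lim_seq_Reals, inv_cf_gap_lim).
  destruct (alternated_series d hd hd0) as [l hl].
  assert (partial : forall N,
      cf_conv a b (S N) = cf_conv a b 0 + sum_f_R0 (tg_alt d) N).
  { induction N as [|N IH]; cbn [sum_f_R0];
      [pose proof (cf_conv_succ_sub 0)|pose proof (cf_conv_succ_sub (S N))];
      unfold tg_alt, d, Rdiv in *; lra. }
  assert (hlim : is_lim_seq (cf_conv a b) (cf_conv a b 0 + l)).
  { apply is_lim_seq_incr_1.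
    apply is_lim_seq_ext with (fun N => cf_conv a b 0 + sum_f_R0 (tg_alt d) N);
      [intro; symmetry; apply partial|].
    apply is_lim_seq_plus'; [apply is_lim_seq_const|apply is_lim_seq_Reals, hl]. }
  exists (cf_conv a b 0 + l). split; [exact hlim|].
  change (Rbar_le 0 (cf_conv a b 0 + l)).
  apply (is_lim_seq_le (fun _ => 0) (cf_conv a b)); [|apply is_lim_seq_const|exact hlim].
  intro; apply cf_conv_nonneg.
Qed.

End UnboundedGap.

End Wallis.

Lemma ln_le_sub1 x : 0 < x -> ln x <= x - 1.
Proof.
  intro hx. apply Rnot_lt_le. intro h. apply exp_increasing in h.
  rewrite exp_ln in h by exact hx. pose proof (exp_ineq1_le (x - 1)). lra.
Qed.

Lemma ln_succ_sub_le x : 0 < x -> ln (x + 1) - ln x <= / x.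
Proof.
  intro hx.
  replace (ln (x + 1) - ln x) with (ln ((x + 1) * / x))
    by (rewrite ln_mult, ln_Rinv by (try apply Rinv_0_lt_compat; lra); ring).
  replace (/ x) with ((x + 1) * / x - 1) at 2 by (field; lra).
  apply ln_le_sub1. apply Rmult_lt_0_compat; [lra|apply Rinv_0_lt_compat; lra].
Qed.

Lemma num_seq_succ r n : num_seq r (S n) = (INR n + 1) ^ 2 * r ^ 2.
Proof. unfold num_seq. rewrite S_INR. reflexivity. Qed.

Section NumSeq.

Variables r b : R.
Hypotheses (hr : 0 < r) (hb : 0 < b).

Lemma num_seq_pos n : 0 < num_seq r (S n).
Proof.
  rewrite num_seq_succ. pose proof (pos_INR n).
  apply Rmult_lt_0_compat; apply pow_lt; lra.
Qed.

Lemma cf_gap_add_harmonic N :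
  cf_gap (num_seq r) b N + 2 * b * cf_gap (num_seq r) b 0 / r / (INR N + 3)
  <= cf_gap (num_seq r) b (S (S N)).
Proof.
  set (g := cf_gap (num_seq r) b).
  pose proof (pos_INR N).
  assert (hc : 0 < (INR N + 3) * r) by nra.
  pose proof (cf_gap_step2 _ _ num_seq_pos hb N _ hc) as h.
  rewrite num_seq_succ, !S_INR in h. specialize (h ltac:(ring)). fold g in h.
  pose proof (cf_gap_le _ _ num_seq_pos hb 0 (S N) ltac:(lia)) as hmono. fold g in hmono.
  replace (2 * b * g 0%nat / r / (INR N + 3))
    with (2 * b / ((INR N + 3) * r) * g 0%nat) by (field; lra).
  replace (2 * b * g (S N) / ((INR N + 1 + 1 + 1) * r))
    with (2 * b / ((INR N + 3) * r) * g (S N)) in h by (field; lra).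
  enough (2 * b / ((INR N + 3) * r) * g 0%nat <= 2 * b / ((INR N + 3) * r) * g (S N))
    by lra.
  apply Rmult_le_compat_l; [apply Rlt_le, Rdiv_lt_0_compat|]; lra.
Qed.

Lemma cf_gap_ge_ln n :
  cf_gap (num_seq r) b 0 + b * cf_gap (num_seq r) b 0 / r * (ln (INR n + 2) - ln 2)
  <= cf_gap (num_seq r) b (2 * n).
Proof.
  set (g := cf_gap (num_seq r) b).
  assert (hk : 0 < b * g 0%nat / r).
  { assert (0 < g 0%nat) by apply (cf_gap_pos _ _ num_seq_pos hb).
    apply Rdiv_lt_0_compat; nra. }
  set (k := b * g 0%nat / r) in *.
  induction n as [|n IH].
  - rewrite Nat.mul_0_r. cbn [INR]. replace (0 + 2) with 2 by ring.
    rewrite Rminus_diag. lra.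
  - pose proof (cf_gap_add_harmonic (2 * n)) as step. fold g in step.
    replace (S (S (2 * n))) with (2 * S n)%nat in step by lia.
    rewrite mult_INR in step. replace (INR 2) with 2 in step by (cbn; ring).
    replace (2 * b * g 0%nat / r) with (2 * k) in step by (unfold k; field; lra).
    pose proof (pos_INR n).
    pose proof (ln_succ_sub_le (INR n + 2) ltac:(lra)) as hln.
    assert (k * (ln (INR n + 2 + 1) - ln (INR n + 2)) <= 2 * k / (2 * INR n + 3)).
    { apply Rle_trans with (k * / (INR n + 2)); [apply Rmult_le_compat_l; lra|].
      apply Rmult_le_reg_r with ((INR n + 2) * (2 * INR n + 3)); [nra|].
      field_simplify; nra. }
    rewrite S_INR. replace (INR n + 1 + 2) with (INR n + 2 + 1) by ring.
    lra.
Qed.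

Lemma cf_gap_unbounded M : exists N, M < cf_gap (num_seq r) b N.
Proof.
  set (g := cf_gap (num_seq r) b).
  assert (hg0 : 0 < g 0%nat) by apply (cf_gap_pos _ _ num_seq_pos hb).
  set (k := b * g 0%nat / r).
  assert (hk : 0 < k) by (apply Rdiv_lt_0_compat; nra).
  destruct (INR_archimed 1 (exp (ln 2 + (M - g 0%nat) / k)) ltac:(lra)) as [n hn].
  exists (2 * n)%nat. pose proof (cf_gap_ge_ln n) as h. fold g k in h.
  assert (hln : (M - g 0%nat) / k < ln (INR n + 2) - ln 2).
  { enough (ln 2 + (M - g 0%nat) / k < ln (INR n + 2)) by lra.
    rewrite <- (ln_exp (ln 2 + _)). apply ln_increasing; [apply exp_pos|lra]. }
  apply (Rmult_lt_compat_l k) in hln; [|exact hk].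
  replace (k * ((M - g 0%nat) / k)) with (M - g 0%nat) in hln by (field; lra).
  lra.
Qed.

End NumSeq.

Lemma cf_val_lim r b : 0 < r -> 0 < b ->
  is_lim_seq (cf_conv (num_seq r) b) (cf_val (num_seq r) b) /\ 0 <= cf_val (num_seq r) b.
Proof.
  intros hr hb.
  destruct (cf_conv_cvg _ _ (num_seq_pos r hr) hb (cf_gap_unbounded r b hr hb))
    as [l [hl hl0]].
  unfold cf_val. rewrite (is_lim_seq_unique _ _ hl). split; [exact hl|exact hl0].
Qed.

Lemma inv_two_cf_val_lim r b : 0 < r -> 0 < b ->
  is_lim_seq (fun N => cf_denom (num_seq r) b (S N) / (2 * cf_numer (num_seq r) b (S N)))
    (1 / (2 * b + 2 * cf_val (num_seq r) b)).
Proof.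
  intros hr hb. destruct (cf_val_lim r b hr hb) as [hl hl0].
  apply is_lim_seq_ext with (u := fun N => / (2 * b + 2 * cf_conv (num_seq r) b N)).
  { intro N. rewrite <- inv_two_cf_conv by (auto using num_seq_pos). unfold Rdiv; ring. }
  replace (Finite (1 / (2 * b + 2 * cf_val (num_seq r) b)))
    with (Rbar_inv (2 * b + 2 * cf_val (num_seq r) b)) by (cbn; f_equal; unfold Rdiv; ring).
  apply is_lim_seq_inv; [|intro h; injection h; lra].
  apply is_lim_seq_plus'; [apply is_lim_seq_const|].
  apply is_lim_seq_scal_l with (lu := cf_val (num_seq r) b), hl.
Qed.

Section FunctionalEquation.

Variables r b : R.
Hypotheses (hr : 0 < r) (hb : 0 < b).

Local Notation a := (num_seq r).

Definition shift_transform (Z : nat -> R) (n : nat) : R :=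
  (2 * INR n * r + b + 3 * r) * Z (S n) + 2 * a (S n) * Z n.

Lemma shift_transform_rec Z : wallis_rec a b Z ->
  three_term (fun _ => b + 2 * r) (fun n => a (S (S n))) (shift_transform Z).
Proof.
  intros hZ n. unfold shift_transform.
  rewrite (hZ (S n)), (hZ n), !num_seq_succ, !S_INR. ring.
Qed.

Lemma cf_numer_shift n :
  (b + r) * cf_numer a (b + 2 * r) (S n) = shift_transform (cf_numer a b) n.
Proof.
  apply (three_term_ext (fun _ => b + 2 * r) (fun n => a (S (S n)))
           (fun n => (b + r) * cf_numer a (b + 2 * r) (S n))).
  - intro k. rewrite (cf_numer_rec a (b + 2 * r) (S k)). ring.
  - apply shift_transform_rec, cf_numer_rec.
  - unfold shift_transform. cbn. rewrite num_seq_succ. cbn. ring.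
  - unfold shift_transform. cbn. rewrite !num_seq_succ. cbn. ring.
Qed.

Lemma cf_denom_shift n :
  (b + r) ^ 2 * cf_denom a (b + 2 * r) (S n) =
  shift_transform (fun k => 2 * cf_numer a b k - (b + r) * cf_denom a b k) n.
Proof.
  apply (three_term_ext (fun _ => b + 2 * r) (fun n => a (S (S n)))
           (fun n => (b + r) ^ 2 * cf_denom a (b + 2 * r) (S n))).
  - intro k. rewrite (cf_denom_rec a (b + 2 * r) (S k)). ring.
  - apply shift_transform_rec. intro k. rewrite cf_numer_rec, cf_denom_rec. ring.
  - unfold shift_transform. cbn. rewrite num_seq_succ. cbn. ring.
  - unfold shift_transform. cbn. rewrite !num_seq_succ. cbn. ring.
Qed.

Lemma shift_transform_pos n : 0 < shift_transform (cf_numer a b) n.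
Proof.
  unfold shift_transform.
  pose proof (cf_numer_pos _ _ (num_seq_pos r hr) hb n).
  pose proof (cf_numer_pos _ _ (num_seq_pos r hr) hb (S n)).
  pose proof (num_seq_pos r hr n). pose proof (pos_INR n).
  assert (0 < 2 * INR n * r + b + 3 * r) by nra.
  apply Rplus_lt_le_0_compat; [|apply Rmult_le_pos]; nra.
Qed.

Lemma funeq_defect_eq N :
  cf_denom a b (S N) / (2 * cf_numer a b (S N))
  + cf_denom a (b + 2 * r) (S N) / (2 * cf_numer a (b + 2 * r) (S N)) - 1 / (b + r)
  = (-1) ^ N * a (S N) * numer_prod a N
    / (cf_numer a b (S N) * shift_transform (cf_numer a b) N).
Proof.
  pose proof (cf_numer_shift N) as hU'. pose proof (cf_denom_shift N) as hV'.
  pose proof (cf_casoratian a b N) as hcas.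
  pose proof (cf_numer_pos _ _ (num_seq_pos r hr) hb (S N)).
  pose proof (shift_transform_pos N).
  set (G := shift_transform (cf_numer a b) N) in *.
  set (D := shift_transform (cf_denom a b) N).
  assert (hV'' : (b + r) ^ 2 * cf_denom a (b + 2 * r) (S N) = 2 * G - (b + r) * D).
  { rewrite hV'. unfold G, D, shift_transform. ring. }
  assert (cross : cf_denom a b (S N) * G - cf_numer a b (S N) * D =
                  2 * a (S N) * (-1) ^ N * numer_prod a N).
  { replace (2 * a (S N) * (-1) ^ N * numer_prod a N)
      with (- 2 * a (S N) * (- (-1) ^ N * numer_prod a N)) by ring.
    rewrite <- hcas. unfold G, D, shift_transform. ring. }
  replace (cf_denom a (b + 2 * r) (S N)) with ((2 * G - (b + r) * D) / (b + r) ^ 2)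
    by (rewrite <- hV''; field; lra).
  replace (cf_numer a (b + 2 * r) (S N)) with (G / (b + r))
    by (rewrite <- hU'; field; lra).
  replace ((-1) ^ N * a (S N) * numer_prod a N) with
    ((cf_denom a b (S N) * G - cf_numer a b (S N) * D) / 2) by (rewrite cross; field).
  field. lra.
Qed.

Lemma funeq_defect_bound N :
  Rabs (cf_denom a b (S (S N)) / (2 * cf_numer a b (S (S N)))
        + cf_denom a (b + 2 * r) (S (S N)) / (2 * cf_numer a (b + 2 * r) (S (S N)))
        - 1 / (b + r))
  <= / (2 * b ^ 2 * cf_gap a b N).
Proof.
  rewrite funeq_defect_eq.
  pose proof (num_seq_pos r hr) as ha.
  pose proof (cf_numer_pos _ _ ha hb (S N)). pose proof (cf_numer_pos _ _ ha hb (S (S N))).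
  pose proof (cf_denom_pos _ _ ha hb N). pose proof (cf_denom_pos _ _ ha hb (S N)).
  pose proof (cf_denom_le_numer _ _ ha hb (S N)).
  pose proof (cf_denom_le_numer _ _ ha hb (S (S N))).
  pose proof (numer_prod_pos _ ha (S N)). pose proof (ha (S N)).
  set (u1 := cf_numer a b (S N)) in *. set (u2 := cf_numer a b (S (S N))) in *.
  set (G := shift_transform (cf_numer a b) (S N)).
  assert (hG : 2 * a (S (S N)) * u1 <= G).
  { unfold G, shift_transform. pose proof (pos_INR (S N)).
    assert (0 <= (2 * INR (S N) * r + b + 3 * r) * u2) by (apply Rmult_le_pos; nra).
    fold u1 u2. lra. }
  assert (hG0 : 0 < G) by nra.
  unfold Rdiv. rewrite !Rabs_mult, pow_1_abs, Rmult_1_l.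
  rewrite (Rabs_pos_eq (a _)), (Rabs_pos_eq (numer_prod _ _)),
    Rabs_pos_eq by (try apply Rlt_le, Rinv_0_lt_compat; nra).
  set (v1 := cf_denom a b (S N)) in *. set (v2 := cf_denom a b (S (S N))) in *.
  apply Rle_trans with (numer_prod a (S N) * / (2 * u2 * u1)).
  - replace (numer_prod a (S N) * / (2 * u2 * u1)) with
      (a (S (S N)) * numer_prod a (S N) * / (u2 * (2 * a (S (S N)) * u1))) by (field; lra).
    apply Rmult_le_compat_l; [nra|].
    assert (0 < 2 * a (S (S N)) * u1) by nra.
    apply Rinv_le_contravar; [apply Rmult_lt_0_compat; lra|].
    apply Rmult_le_compat_l; lra.
  - replace (/ (2 * b ^ 2 * cf_gap a b N)) with
      (numer_prod a (S N) * / (2 * (b * v2) * (b * v1))) by (unfold cf_gap; fold v1 v2; field; lra).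
    apply Rmult_le_compat_l; [lra|].
    assert (0 < b * v1) by nra. assert (0 < b * v2) by nra.
    apply Rinv_le_contravar; [nra|].
    apply Rmult_le_compat; nra.
Qed.

Lemma cf_val_funeq :
  1 / (2 * b + 2 * cf_val a b) + 1 / (2 * (b + 2 * r) + 2 * cf_val a (b + 2 * r))
  = 1 / (b + r).
Proof.
  set (E N := cf_denom a b (S (S N)) / (2 * cf_numer a b (S (S N)))
        + cf_denom a (b + 2 * r) (S (S N)) / (2 * cf_numer a (b + 2 * r) (S (S N)))
        - 1 / (b + r)).
  assert (lim_val : is_lim_seq E (1 / (2 * b + 2 * cf_val a b)
      + 1 / (2 * (b + 2 * r) + 2 * cf_val a (b + 2 * r)) - 1 / (b + r))).
  { unfold E. apply is_lim_seq_minus'; [apply is_lim_seq_plus'|apply is_lim_seq_const].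
    - apply (is_lim_seq_incr_1 (fun N => _ / (2 * cf_numer a b (S N)))).
      apply inv_two_cf_val_lim; assumption.
    - apply (is_lim_seq_incr_1 (fun N => _ / (2 * cf_numer a (b + 2 * r) (S N)))).
      apply inv_two_cf_val_lim; lra. }
  assert (lim_0 : is_lim_seq E 0).
  { apply is_lim_seq_abs_0.
    apply is_lim_seq_le_le with (fun _ => 0) (fun N => / (2 * b ^ 2) * / cf_gap a b N).
    - intro N. split; [apply Rabs_pos|].
      pose proof (cf_gap_pos _ _ (num_seq_pos r hr) hb N). pose proof (pow_lt b 2 hb).
      rewrite <- Rinv_mult. apply funeq_defect_bound.
    - apply is_lim_seq_const.
    - replace (Finite 0) with (Rbar_mult (/ (2 * b ^ 2)) 0) by (cbn; f_equal; ring).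
      apply is_lim_seq_scal_l, inv_cf_gap_lim; [apply num_seq_pos, hr|exact hb|].
      apply cf_gap_unbounded; assumption. }
  pose proof (is_lim_seq_unique _ _ lim_val) as e.
  rewrite (is_lim_seq_unique _ _ lim_0) in e. injection e. lra.
Qed.

End FunctionalEquation.

Lemma antiperiodic_lim_0 (d : R -> R) (D T : R) : 0 < T ->
  (forall s, D < s -> d s + d (s + T) = 0) -> is_lim d p_infty 0 ->
  forall s, D < s -> d s = 0.
Proof.
  intros hT hd hlim s hs.
  assert (orbit : forall n, Rabs (d (s + INR n * T)) = Rabs (d s)).
  { induction n as [|n IH].
    - cbn. rewrite Rmult_0_l, Rplus_0_r. reflexivity.
    - rewrite S_INR. pose proof (pos_INR n).
      replace (s + (INR n + 1) * T) with (s + INR n * T + T) by ring.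
      replace (d (s + INR n * T + T)) with (- d (s + INR n * T))
        by (pose proof (hd (s + INR n * T) ltac:(nra)); lra).
      rewrite Rabs_Ropp. exact IH. }
  destruct (Req_dec (d s) 0) as [|hne]; [assumption|exfalso].
  apply is_lim_spec in hlim.
  destruct (hlim (mkposreal _ (Rabs_pos_lt _ hne))) as [M hM]. cbn in hM.
  destruct (INR_archimed T (M - s) hT) as [n hn].
  specialize (hM (s + INR n * T) ltac:(lra)).
  rewrite Rminus_0_r, orbit in hM. lra.
Qed.

Lemma funeq_unique (f g G : R -> R) (D T : R) : 0 < T ->
  (forall s, D < s -> f s + f (s + T) = G s) -> is_lim f p_infty 0 ->
  (forall s, D < s -> g s + g (s + T) = G s) -> is_lim g p_infty 0 ->
  forall s, D < s -> f s = g s.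
Proof.
  intros hT hf lf hg lg s hs.
  enough (f s - g s = 0) by lra.
  apply (antiperiodic_lim_0 (fun s => f s - g s) D T hT); [|clear s hs|exact hs].
  - intros t ht. cbn. pose proof (hf t ht). pose proof (hg t ht). lra.
  - replace (Finite 0) with (Finite (0 - 0)) by (f_equal; ring).
    apply is_lim_minus'; assumption.
Qed.

Definition cf_solution (r c s : R) : R :=
  1 / (2 * (s + c) + 2 * cf_val (num_seq r) (s + c)).

Lemma f1_sol_eq r s : f1_sol r s = cf_solution r (1 - r) s.
Proof.
  unfold f1_sol, cf_solution. replace (1 - r + s) with (s + (1 - r)) by ring.
  f_equal. ring.
Qed.

Lemma f2_sol_eq r s : f2_sol r s = cf_solution r (r - 1) s.
Proof.
  unfold f2_sol, cf_solution. replace (r - 1 + s) with (s + (r - 1)) by ring.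
  f_equal. ring.
Qed.

Section CfSolution.

Variables r c : R.
Hypothesis hr : 0 < r.

Lemma cf_solution_funeq s : 0 < s + c ->
  cf_solution r c s + cf_solution r c (s + 2 * r) = 1 / (s + c + r).
Proof.
  intro hs. unfold cf_solution.
  replace (s + 2 * r + c) with (s + c + 2 * r) by ring.
  apply cf_val_funeq; assumption.
Qed.

Lemma cf_solution_lim : is_lim (cf_solution r c) p_infty 0.
Proof.
  apply is_lim_spec. intro eps. exists (/ eps - c). intros s hs.
  pose proof (cond_pos eps). assert (0 < / eps) by (apply Rinv_0_lt_compat; lra).
  destruct (cf_val_lim r (s + c) hr ltac:(lra)) as [_ hv].
  unfold cf_solution. set (v := cf_val (num_seq r) (s + c)) in *.
  rewrite Rminus_0_r, Rabs_pos_eq by (apply Rlt_le, Rdiv_lt_0_compat; lra).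
  apply Rle_lt_trans with (/ (s + c)).
  - unfold Rdiv. rewrite Rmult_1_l. apply Rinv_le_contravar; lra.
  - rewrite <- (Rinv_inv eps). apply Rinv_lt_contravar; [nra|lra].
Qed.

Lemma cf_solution_unique D (hD : forall s, D < s -> 0 < s + c) (f : R -> R) :
  (forall s, D < s -> f s + f (s + 2 * r) = 1 / (s + c + r)) ->
  is_lim f p_infty 0 ->
  forall s, D < s -> f s = cf_solution r c s.
Proof.
  intros hf lf.
  apply (funeq_unique f (cf_solution r c) (fun s => 1 / (s + c + r)) D (2 * r));
    auto using cf_solution_lim; [lra|].
  intros s hs. apply cf_solution_funeq, hD, hs.
Qed.

End CfSolution.

Lemma lt_of_abs_sub1_lt r s : Rabs (r - 1) < s -> 0 < s + (1 - r) /\ 0 < s + (r - 1).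
Proof.
  intro hs. pose proof (Rle_abs (r - 1)). pose proof (Rle_abs (- (r - 1))).
  rewrite Rabs_Ropp in *. lra.
Qed.

Theorem corollary3 (r : R) (hr : 0 < r) :
  (forall s, Rabs (r - 1) < s ->
     ex_finite_lim_seq (cf_conv (num_seq r) (1 - r + s)) /\
     ex_finite_lim_seq (cf_conv (num_seq r) (r - 1 + s))) /\
  ((forall s, Rabs (r - 1) < s ->
      f1_sol r s + f1_sol r (s + 2 * r) = 1 / (s + 1)) /\
   is_lim (f1_sol r) p_infty 0 /\
   (forall f : R -> R,
      (forall s, Rabs (r - 1) < s -> f s + f (s + 2 * r) = 1 / (s + 1)) ->
      is_lim f p_infty 0 ->
      forall s, Rabs (r - 1) < s -> f s = f1_sol r s)) /\
  ((forall s, Rabs (r - 1) < s ->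
      f2_sol r s + f2_sol r (s + 2 * r) = 1 / (s + 2 * r - 1)) /\
   is_lim (f2_sol r) p_infty 0 /\
   (forall f : R -> R,
      (forall s, Rabs (r - 1) < s -> f s + f (s + 2 * r) = 1 / (s + 2 * r - 1)) ->
      is_lim f p_infty 0 ->
      forall s, Rabs (r - 1) < s -> f s = f2_sol r s)).
Proof.
  assert (range1 : forall s, Rabs (r - 1) < s -> 0 < s + (1 - r))
    by (intros s hs; apply lt_of_abs_sub1_lt, hs).
  assert (range2 : forall s, Rabs (r - 1) < s -> 0 < s + (r - 1))
    by (intros s hs; apply lt_of_abs_sub1_lt, hs).
  assert (rhs1 : forall s, 1 / (s + 1) = 1 / (s + (1 - r) + r))
    by (intro; f_equal; ring).
  assert (rhs2 : forall s, 1 / (s + 2 * r - 1) = 1 / (s + (r - 1) + r))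
    by (intro; f_equal; ring).
  split; [|split; (split; [|split])].
  - intros s hs. rewrite (Rplus_comm (1 - r)), (Rplus_comm (r - 1)).
    split; eexists; apply cf_val_lim; auto.
  - intros s hs. rewrite !f1_sol_eq, rhs1. apply cf_solution_funeq; auto.
  - apply (is_lim_ext (cf_solution r (1 - r))); [intro; symmetry; apply f1_sol_eq|].
    apply cf_solution_lim, hr.
  - intros f hf lf s hs. rewrite f1_sol_eq.
    apply (cf_solution_unique r (1 - r) hr _ range1); auto.
    intros t ht. rewrite <- rhs1. auto.
  - intros s hs. rewrite !f2_sol_eq, rhs2. apply cf_solution_funeq; auto.
  - apply (is_lim_ext (cf_solution r (r - 1))); [intro; symmetry; apply f2_sol_eq|].
    apply cf_solution_lim, hr.
  - intros f hf lf s hs. rewrite f2_sol_eq.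
    apply (cf_solution_unique r (r - 1) hr _ range2); auto.
    intros t ht. rewrite <- rhs2. auto.
Qed.
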